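(* Consider a Levin–Wen string-net model built from a multiplicity-free fusion category with label set $\mathcal{F}$ in which every label is self-dual ($\bar a=a$) and which has an $S$-matrix $S$. Let $a\in\mathcal{F}$ with $a\neq 1$, let $e$ be an edge of the trivalent lattice, and let $p$ be either of the two plaquettes adjacent to $e$, with Levin–Wen plaquette operator $B_p$. Then for every $|\psi\rangle\in\mathcal{H}_{\mathrm{valid}}$ with $B_p|\psi\rangle=|\psi\rangle$, one has $B_p\big(O_a^{(e)}|\psi\rangle\big)=0$.
   Context: Each edge of a trivalent (e.g. honeycomb) lattice carries a qudit with orthonormal basis $\{|b\rangle\}_{b\in\mathcal{F}}$. The fusion category has fusion rules $\delta_{abc}\in\{0,1\}$, quantum dimensions $d_s>0$, total quantum dimension $D=\sqrt{\sum_j d_j^2}$, and unitary symmetric $S$-matrix. The vertex projector $A_v$ projects onto configurations where the three labels $(a,b,c)$ at vertex $v$ satisfy $\delta_{abc}=1$; $\mathcal{H}_{\mathrm{valid}}=\mathrm{span}\{|\psi\rangle: A_v|\psi\rangle=|\psi\rangle\ \forall v\}$. The plaquette operator is the standard Levin–Wen operator $B_p=\sum_{s\in\mathcal{F}}\frac{d_s}{D^2}B_p^s$, where $B_p^s$ (defined on $\mathcal{H}_{\mathrm{valid}}$ via the $F$-symbols) inserts a loop of type $s$ inside plaquette $p$ and fuses it into the boundary edges. The single-qudit operator $O_a^{(e)}$ acts on the qudit at edge $e$ by $O_a|b\rangle=\frac{S_{ab}}{S_{1b}}|b\rangle$ for all $b\in\mathcal{F}$, and as identity elsewhere. *)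

From HB Require Import structures.
From mathcomp Require Import all_boot all_order all_algebra.
Set Implicit Arguments. Unset Strict Implicit. Unset Printing Implicit Defensive.
Import Order.TTheory GRing.Theory Num.Theory.
Local Open Scope ring_scope.

(* Since every label is self-dual, duals are omitted everywhere.            *)
Record LWdata (C : numClosedFieldType) := LWData {
  lab : finType;
  lab1 : lab;
  N : lab -> lab -> lab -> bool;
  d : lab -> C;
  F : lab -> lab -> lab -> lab -> lab -> lab -> C;  (* F^{ijm}_{kln}       *)
  S : lab -> lab -> C;
  N_unit : forall a b, N lab1 a b = (a == b);
  N_sym12 : forall a b c, N a b c = N b a c;
  N_sym23 : forall a b c, N a b c = N a c b;
  N_assoc : forall a b c e,
    \sum_(x : lab) ((N a b x && N x c e) : nat)%:R
      = \sum_(x : lab) ((N b c x && N a x e) : nat)%:R :> C;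
  d_pos : forall s, 0 < d s;
  d_one : d lab1 = 1;
  d_fus : forall a b, d a * d b = \sum_(c : lab) (N a b c)%:R * d c;
  (* F-symbols (Levin-Wen conventions, eqs. for F with v_s = sqrt d_s),
     vanishing unless the four triangles {i,j,m},{k,l,m},{j,k,n},{i,l,n}
     are admissible *)
  F_adm : forall i j m k l n,
    ~~ [&& N i j m, N k l m, N j k n & N i l n] -> F i j m k l n = 0;
  F_norm : forall i j k,
    F i j k j i lab1 = (N i j k)%:R * sqrtC (d k) / (sqrtC (d i) * sqrtC (d j));
  F_tet1 : forall i j m k l n, F i j m k l n = F l k m j i n;
  F_tet2 : forall i j m k l n, F i j m k l n = F j i m l k n;
  F_tet3 : forall i j m k l n,
    F i j m k l n = F i m j k n l * (sqrtC (d m) * sqrtC (d n))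
                                  / (sqrtC (d j) * sqrtC (d l));
  F_pent : forall i j k l m p q r s,
    \sum_(n : lab) F m l q k p n * F j i p m n s * F j s n l k r
      = F j i p q k r * F r i q m l s;
  S_sym : forall a b, S a b = S b a;
  S_unitary : forall a b, \sum_(x : lab) S a x * (S b x)^* = (a == b)%:R;
  S_one : forall b, S lab1 b = d b / sqrtC (\sum_(j : lab) d j ^+ 2);
  S_verlinde : forall a b c,
    (N a b c)%:R = \sum_(x : lab) S a x * S b x * (S c x)^* / S lab1 x
}.


Arguments N {C} l0 _ _ _.
Arguments d {C} l0 _.
Arguments F {C} l0 _ _ _ _ _ _.
Arguments S {C} l0 _ _.

Definition totdim {C} (M : LWdata C) : C := sqrtC (\sum_(j : lab M) d M j ^+ 2).

(* Trivalent lattice: a finite graph with vertices of degree 3, embedded    *)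
(* via a rotation system: tl_inc v 0, tl_inc v 1, tl_inc v 2 are the three  *)
(* distinct edges at v, in the cyclic order given by the embedding.         *)
Record trivalent_lattice := TLat {
  tl_E : finType;
  tl_V : finType;
  tl_inc : tl_V -> 'I_3 -> tl_E;
  tl_inc_inj : forall v, injective (tl_inc v);
  tl_edge_ends : forall e, (#|[set v | e \in codom (tl_inc v)]| <= 2)%N
}.

(* A plaquette (face) of the embedded lattice: its boundary is the cyclic   *)
(* sequence of distinct edges pl_bnd 0, ..., pl_bnd (n-1); the vertex       *)
(* pl_vtx i joins pl_bnd i and pl_bnd (i+1 mod n), and pl_bnd (i+1) follows *)
(* pl_bnd i in the rotation at pl_vtx i (face tracing), the third edge at   *)
(* that vertex being the external leg pl_leg i, which is not on the face.   *)
Record plaquette (Lat : trivalent_lattice) := Plaq {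
  pl_n : nat;
  pl_bnd : 'I_pl_n -> tl_E Lat;
  pl_leg : 'I_pl_n -> tl_E Lat;
  pl_vtx : 'I_pl_n -> tl_V Lat;
  pl_bnd_inj : injective pl_bnd;
  pl_leg_out : forall i j, pl_leg i != pl_bnd j;
  pl_face : forall i, exists k : 'I_3,
    [/\ tl_inc (pl_vtx i) k = pl_bnd i,
        tl_inc (pl_vtx i) (ordS k) = pl_bnd (ordS i)
      & tl_inc (pl_vtx i) (ordS (ordS k)) = pl_leg i]
}.

Arguments pl_bnd {Lat} p _.
Arguments pl_leg {Lat} p _.
Arguments pl_vtx {Lat} p _.

Section Model.
Variables (C : numClosedFieldType) (M : LWdata C) (Lat : trivalent_lattice).

Definition config := {ffun tl_E Lat -> lab M}.
Definition state := config -> C.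

Definition Av (v : tl_V Lat) (psi : state) : state :=
  fun x => if N M (x (tl_inc v 0)) (x (tl_inc v 1)) (x (tl_inc v 2))
           then psi x else 0.

Definition valid (psi : state) : Prop := forall v, Av v psi = psi.

Definition on_bnd (p : plaquette Lat) (e : tl_E Lat) : bool :=
  [exists i, pl_bnd p i == e].

(* matrix element <y| B_p^s |x> (Levin-Wen formula; self-dual labels) *)
Definition Bs_coef (p : plaquette Lat) (s : lab M) (x y : config) : C :=
  if [forall e, ~~ on_bnd p e ==> (x e == y e)] then
    \prod_(i : 'I_(pl_n p))
      F M (x (pl_leg p i)) (x (pl_bnd p i)) (x (pl_bnd p (ordS i)))
          s (y (pl_bnd p (ordS i))) (y (pl_bnd p i))
  else 0.

Definition Bps (p : plaquette Lat) (s : lab M) (psi : state) : state :=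
  fun y => \sum_(x : config) Bs_coef p s x y * psi x.

Definition Bp (p : plaquette Lat) (psi : state) : state :=
  fun y => \sum_(s : lab M) d M s / totdim M ^+ 2 * Bps p s psi y.

Definition Oa (a : lab M) (e : tl_E Lat) (psi : state) : state :=
  fun x => S M a (x e) / S M (lab1 M) (x e) * psi x.

End Model.

From mathcomp Require Import all_boot all_order all_algebra.
From mathcomp Require Import ring zify.
From Stdlib Require Import FunctionalExtensionality.
Set Implicit Arguments. Unset Strict Implicit. Unset Printing Implicit Defensive.
Import Order.TTheory GRing.Theory Num.Theory.
Local Open Scope ring_scope.

(* Since psi = B_p psi, it suffices that B_p O_a B_p = D^-4 \sum_{s,t} d_s d_t B_p^t O_a B_p^s
   vanishes identically.  In a matrix element of
   B_p^t O_a B_p^s, split every product of two F-symbols along the pentagon equation.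
   This introduces new labels u_i, and the sum over the intermediate label y_i of the
   i-th boundary edge becomes an orthogonality relation forcing u_(i-1) = u_i, except on
   the edge e, where y carries the weight S_ay / S_1y.  So all u_i equal one label u, and
   the sum over s and t collapses to d_u d_y^2 (orthogonality again, then the fusion rule
   for quantum dimensions).  What remains is a multiple of
   \sum_y S_ay / S_1y d_y^2 = D^2 \sum_y S_ay (S_1y)^*, which vanishes by unitarity of S
   since a <> 1. *)

Section FSymbols.
Variables (C : numClosedFieldType) (M : LWdata C).
Local Notation L := (lab M).
Local Notation F := (F M).
Local Notation N := (N M).
Local Notation d := (d M).
Local Notation v x := (sqrtC (d x)).

Lemma d_neq0 x : d x != 0.
Proof. by rewrite gt_eqF // d_pos. Qed.

Lemma sqrt_d_neq0 x : v x != 0.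
Proof. by rewrite sqrtC_eq0 d_neq0. Qed.

Lemma sqrt_dK x : v x * v x = d x.
Proof. by rewrite -expr2 sqrtCK. Qed.

Lemma F_mulN_iln i j m k l n : F i j m k l n * (N i l n)%:R = F i j m k l n.
Proof.
case h: (N i l n); first by rewrite mulr1.
by rewrite F_adm ?mul0r // h !andbF.
Qed.

Lemma F_mulN_klm i j m k l n : F i j m k l n * (N k l m)%:R = F i j m k l n.
Proof.
case h: (N k l m); first by rewrite mulr1.
by rewrite F_adm ?mul0r // h andbF.
Qed.

Lemma F_tet12 i j m k l n : F i j m k l n = F k l m i j n.
Proof. by rewrite F_tet1 F_tet2. Qed.

Lemma F_unit a b c : F a (lab1 M) a b c b = (N a b c)%:R.
Proof.
have := F_tet3 b a c a b (lab1 M).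
rewrite F_norm d_one sqrtC1 mulr1 -F_tet12 => h.
have hv : v c / (v a * v b) != 0.
  by rewrite mulf_neq0 ?invr_eq0 ?mulf_neq0 ?sqrt_d_neq0.
apply: (mulIf hv); rewrite mulrA -h N_sym12 mulrA.
by rewrite [v b * v a]mulrC.
Qed.

(* The pentagon equation with one outer label set to 1, via [F_unit]. *)
Lemma F_orthogonality i l m k j r :
  \sum_(n : L) F i l m k j n * (N j i n)%:R * F j i n l k r
  = (m == r)%:R * (N j m k)%:R * (N m i l)%:R.
Proof.
transitivity (\sum_(n : L) F i l m k j n * F j (lab1 M) j i n i * F j i n l k r).
  by apply: eq_bigr => n _; rewrite F_unit.
rewrite F_pent; case: eqP => [<-|/eqP hmr]; first by rewrite !F_unit mul1r.
rewrite !mul0r F_adm ?mul0r // N_unit (negbTE hmr).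
by rewrite !(andbF, andFb).
Qed.

Lemma F_orthogonality_dual z t s x u u' :
  \sum_(y : L) F z t y s x u * F x z u' t s y
  = (u' == u)%:R * (N s u' t)%:R * (N u' x z)%:R.
Proof.
rewrite -F_orthogonality; apply: eq_bigr => y _.
by rewrite F_tet12 -[F x z u' t s y in LHS]F_mulN_iln (N_sym12 x s y); ring.
Qed.

Lemma F_pentagon_split l x x' s y' y t z' z :
  F l x x' s y' y * F l y y' t z' z
  = \sum_(u : L) F x z u t s y * F l x x' u z' z * F z' t y' s x' u.
Proof.
rewrite (F_tet2 l x x') (F_tet2 l y y') -F_pent.
by apply: eq_bigr => u _; rewrite (F_tet2 l x x' u z' z); ring.
Qed.

Lemma sum_d_FF x z u t y :
  \sum_(s : L) d s * (F x z u t s y * F s x y z t u)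
  = d u * d y / d z * ((N y z t)%:R * (N z x u)%:R).
Proof.
(* Tetrahedral symmetry moves [s] to the summed position of [F_orthogonality]; the
   square roots of dimensions cancel up to d_u d_y / d_z. *)
have summandE s : d s * (F x z u t s y * F s x y z t u)
    = d u * d y / d z * (F x u z t y s * (N y x s)%:R * F y x s u t z).
  rewrite (N_sym12 y x s) F_mulN_iln (F_tet3 x z u t s y) (F_tet3 s x y z t u).
  rewrite (F_tet2 s y x z u t) (F_tet3 y s x u z t).
  move: (sqrt_dK s) (sqrt_dK u) (sqrt_dK y) (sqrt_dK z).
  move: (sqrt_d_neq0 s) (sqrt_d_neq0 z) (sqrt_d_neq0 x) (sqrt_d_neq0 t).
  generalize (v s) (v u) (v y) (v z) (v x) (v t) => ? ? ? ? ? ? hs hz hx ht <- <- <- <-.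
  by field; rewrite hs hz hx ht.
by rewrite (eq_bigr _ (fun s _ => summandE s)) -big_distrr F_orthogonality eqxx mul1r.
Qed.

Lemma sum_dd_FF z x u y :
  \sum_(s : L) \sum_(t : L) d s * d t * (F z t y s x u * F x z u t s y)
  = d u * (d y * d y) * (N z x u)%:R.
Proof.
rewrite exchange_big /=.
transitivity (\sum_(t : L) d t * \sum_(s : L) d s * (F x z u t s y * F s x y z t u)).
  apply: eq_bigr => t _; rewrite big_distrr /=; apply: eq_bigr => s _.
  by rewrite -F_tet12; ring.
under eq_bigr => t _ do rewrite sum_d_FF.
transitivity (d u * d y / d z * (N z x u)%:R * \sum_(t : L) (N y z t)%:R * d t).
  by rewrite big_distrr /=; apply: eq_bigr => t _; ring.
rewrite -d_fus N_sym12.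
by field; rewrite d_neq0.
Qed.

End FSymbols.

Section CyclicOrdinals.
Local Open Scope nat_scope.

Lemma modn_lt_double a n : a < n + n -> a %% n = if a < n then a else a - n.
Proof.
move=> h; case: ltnP => h2; first by rewrite modn_small.
by rewrite -{1}(subnK h2) modnDr modn_small //; lia.
Qed.

Lemma val_iter_ordS n (j : 'I_n) m : val (iter m (@ordS n) j) = (j + m) %% n.
Proof.
elim: m => [|m IH] /=; first by rewrite addn0 modn_small.
by rewrite IH -[((j + m) %% n).+1]addn1 modnDml addn1 addnS.
Qed.

Lemma ord_pred_const (T : Type) n (j : 'I_n) (u : 'I_n -> T) :
  (forall k, k != j -> u (ord_pred k) = u k) -> forall k, u k = u j.
Proof.
move=> Hu.
have iter_const m : m < n -> u (iter m (@ordS n) j) = u j.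
  elim: m => [|m IH] // hm /=.
  rewrite -IH ?(ltnW hm) // -[in RHS](ordSK (iter m (@ordS n) j)) Hu //.
  apply/eqP => /(congr1 val); rewrite /= -[_.+1 %% n]/(val (ordS _)).
  rewrite -/(iter m.+1 _ _) val_iter_ordS modn_lt_double; last by have := ltn_ord j; lia.
  by case: ltnP => ?; lia.
move=> k; have hk := ltn_ord k; have hj := ltn_ord j.
have [m hm hmk] : exists2 m, m < n & (j + m) %% n = k.
  case: (leqP j k) => h.
    by exists (k - j); [lia | rewrite modn_small; lia].
  exists (k + n - j); first lia.
  by rewrite modn_lt_double; [case: ltnP => ?; lia | lia].
by rewrite -(iter_const m hm); congr u; apply: val_inj; rewrite val_iter_ordS hmk.
Qed.

End CyclicOrdinals.

Section LoopComposition.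
Variables (C : numClosedFieldType) (M : LWdata C).
Local Notation L := (lab M).
Local Notation F := (F M).
Local Notation N := (N M).
Local Notation d := (d M).
Variables (n : nat) (X Z : 'I_n -> L).

(* After splitting B^t B^s with [F_pentagon_split], the intermediate label y of the k-th
   boundary edge occurs in exactly these two factors, next to the new labels a = u_(k-1)
   and b = u_k. *)
Definition vertical_kernel (w : 'I_n -> L -> C) s t k a b : C :=
  \sum_(y : L) w k y * F (Z k) t y s (X k) a * F (X k) (Z k) b t s y.

Lemma loop_composition (l : 'I_n -> L) (w : 'I_n -> L -> C) s t :
  \sum_(f : {ffun 'I_n -> L})
     (\prod_i w i (f i)) *
     ((\prod_i F (l i) (X i) (X (ordS i)) s (f (ordS i)) (f i)) *
      (\prod_i F (l i) (f i) (f (ordS i)) t (Z (ordS i)) (Z i)))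
  = \sum_(u : {ffun 'I_n -> L})
     (\prod_i F (l i) (X i) (X (ordS i)) (u i) (Z (ordS i)) (Z i)) *
     \prod_k vertical_kernel w s t k (u (ord_pred k)) (u k).
Proof.
transitivity (\sum_(f : {ffun 'I_n -> L}) \sum_(u : {ffun 'I_n -> L})
   (\prod_i w i (f i)) * \prod_i (F (X i) (Z i) (u i) t s (f i)
         * F (l i) (X i) (X (ordS i)) (u i) (Z (ordS i)) (Z i)
         * F (Z (ordS i)) t (f (ordS i)) s (X (ordS i)) (u i))).
  apply: eq_bigr => f _; rewrite -big_distrr /= -big_split /=; congr (_ * _).
  by under eq_bigr => i _ do rewrite F_pentagon_split; rewrite bigA_distr_bigA.
rewrite exchange_big /=; apply: eq_bigr => u _.
transitivity (\sum_(f : {ffun 'I_n -> L})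
   (\prod_i F (l i) (X i) (X (ordS i)) (u i) (Z (ordS i)) (Z i)) *
   \prod_k (w k (f k) * F (Z k) t (f k) s (X k) (u (ord_pred k))
            * F (X k) (Z k) (u k) t s (f k))).
  apply: eq_bigr => f _; rewrite !big_split /=.
  rewrite [X in _ = _ * (_ * X * _)](reindex_inj (@ordS_inj n)) /=.
  under [X in _ = _ * (_ * X * _)]eq_bigr => i _ do rewrite ordSK.
  ring.
by rewrite -big_distrr /= /vertical_kernel bigA_distr_bigA.
Qed.

Variables (j : 'I_n) (w : 'I_n -> L -> C).
Hypothesis w_off_j : forall k, k != j -> w k =1 (fun _ => 1).

Lemma vertical_kernel_off s t k a b : k != j ->
  vertical_kernel w s t k a b = (b == a)%:R * (N s b t)%:R * (N b (X k) (Z k))%:R.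
Proof.
move=> hk; rewrite -F_orthogonality_dual; apply: eq_bigr => y _.
by rewrite w_off_j // mul1r.
Qed.

Lemma prod_vertical_kernel_nonconst s t (u : 'I_n -> L) k :
  k != j -> u (ord_pred k) != u k -> \prod_i vertical_kernel w s t i (u (ord_pred i)) (u i) = 0.
Proof.
move=> hkj hu; rewrite (bigD1 k) //= vertical_kernel_off // eq_sym (negbTE hu).
by rewrite !mul0r.
Qed.

Lemma sum_prod_vertical_kernel_const u0 :
  \sum_(s : L) \sum_(t : L) d s * d t * \prod_k vertical_kernel w s t k u0 u0
  = (\prod_(k | k != j) (N u0 (X k) (Z k))%:R) * d u0 * (N (Z j) (X j) u0)%:R
    * \sum_(y : L) w j y * (d y * d y).
Proof.
set P := \prod_(k | k != j) _.
have split_j s t : d s * d t * \prod_k vertical_kernel w s t k u0 u0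
    = P * (d s * d t * vertical_kernel w s t j u0 u0).
  rewrite (bigD1 j) //=; case hN: (N s u0 t).
    rewrite /P (eq_bigr _ (fun k hk => vertical_kernel_off s t u0 u0 hk)).
    by under eq_bigr => k _ do rewrite eqxx hN !mul1r; ring.
  have -> : vertical_kernel w s t j u0 u0 = 0.
    apply: big1 => y _.
    by rewrite -(F_mulN_klm (X j) (Z j) u0 t s y) (N_sym12 t s u0) (N_sym23 s t u0) hN !mulr0.
  by rewrite !(mul0r, mulr0).
transitivity (\sum_(y : L) P * w j y *
    \sum_(s : L) \sum_(t : L) d s * d t * (F (Z j) t y s (X j) u0 * F (X j) (Z j) u0 t s y)).
  under eq_bigr => s _ do under eq_bigr => t _ do
    rewrite split_j /vertical_kernel !big_distrr.
  under eq_bigr => s _ do rewrite exchange_big.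
  rewrite exchange_big /=; apply: eq_bigr => y _; rewrite big_distrr /=.
  by apply: eq_bigr => s _; rewrite big_distrr /=; apply: eq_bigr => t _; ring.
rewrite big_distrr /=; apply: eq_bigr => y _; rewrite sum_dd_FF; ring.
Qed.

Lemma sum_prod_vertical_kernel_eq0 (u : 'I_n -> L) :
  \sum_(y : L) w j y * (d y * d y) = 0 ->
  \sum_(s : L) \sum_(t : L) d s * d t * \prod_k vertical_kernel w s t k (u (ord_pred k)) (u k)
  = 0.
Proof.
move=> hw.
have [k /andP [hkj hu]|hconst] := pickP [pred k | (k != j) && (u (ord_pred k) != u k)].
  by apply: big1 => s _; apply: big1 => t _; rewrite (prod_vertical_kernel_nonconst _ _ hkj hu) mulr0.
have hc : forall k, u k = u j.
  apply: ord_pred_const => k hk; apply/eqP.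
  by have := hconst k; rewrite /= hk /= => /negbFE.
under eq_bigr => s _ do under eq_bigr => t _ do under eq_bigr => k _ do rewrite !hc.
by rewrite sum_prod_vertical_kernel_const hw mulr0.
Qed.

End LoopComposition.

Section Plaquette.
Variables (C : numClosedFieldType) (M : LWdata C) (Lat : trivalent_lattice)
  (p : plaquette Lat).
Local Notation L := (lab M).
Local Notation config := (config M Lat).
Local Notation n := (pl_n p).

Definition agree_off_bnd (x y : config) := [forall e, ~~ on_bnd p e ==> (x e == y e)].

Definition set_bnd (x : config) (f : {ffun 'I_n -> L}) : config :=
  [ffun e => if [pick i | pl_bnd p i == e] is Some i then f i else x e].

Definition bnd_labels (y : config) : {ffun 'I_n -> L} := [ffun i => y (pl_bnd p i)].

Lemma set_bnd_bnd x f i : set_bnd x f (pl_bnd p i) = f i.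
Proof.
rewrite ffunE; case: pickP => [i' /eqP h|/(_ i)]; last by rewrite eqxx.
by rewrite (pl_bnd_inj h).
Qed.

Lemma set_bnd_off x f e : ~~ on_bnd p e -> set_bnd x f e = x e.
Proof.
rewrite ffunE; case: pickP => [i hi|//].
by case/negP; apply/existsP; exists i.
Qed.

Lemma leg_off_bnd i : ~~ on_bnd p (pl_leg p i).
Proof. by apply/existsP => -[k /eqP hk]; have := pl_leg_out i k; rewrite hk eqxx. Qed.

Lemma agree_set_bnd x f : agree_off_bnd x (set_bnd x f).
Proof. by apply/forallP => e; apply/implyP => he; rewrite set_bnd_off. Qed.

Lemma bnd_labels_set_bnd x f : bnd_labels (set_bnd x f) = f.
Proof. by apply/ffunP => i; rewrite ffunE set_bnd_bnd. Qed.

Lemma set_bnd_labels x y : agree_off_bnd x y -> set_bnd x (bnd_labels y) = y.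
Proof.
move=> /forallP hxy; apply/ffunP => e; case he: (on_bnd p e).
  by case/existsP: he => i /eqP <-; rewrite set_bnd_bnd ffunE.
by rewrite set_bnd_off ?he //; have := hxy e; rewrite he => /eqP.
Qed.

Lemma agree_off_bnd_trans x y z :
  agree_off_bnd x y -> agree_off_bnd y z = agree_off_bnd x z.
Proof.
move=> /forallP hxy; apply/forallP/forallP => h e; have := h e; have := hxy e;
  by case: (on_bnd p e) => //= /eqP ->.
Qed.

Lemma sum_agree_off_bnd x (G : config -> C) :
  \sum_(y : config) (if agree_off_bnd x y then G y else 0)
  = \sum_(f : {ffun 'I_n -> L}) G (set_bnd x f).
Proof.
rewrite -big_mkcond (reindex_onto (set_bnd x) bnd_labels) /=; last exact: set_bnd_labels.
by apply: eq_bigl => f; rewrite agree_set_bnd bnd_labels_set_bnd eqxx.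
Qed.

Definition sandwich_coef (e : tl_E Lat) (g : L -> C) s t (x z : config) : C :=
  \sum_(y : config) Bs_coef p s x y * (g (y e) * Bs_coef p t y z).

Lemma sandwich_coef_off e g s t x z :
  ~~ agree_off_bnd x z -> sandwich_coef e g s t x z = 0.
Proof.
move=> /negbTE hxz; apply: big1 => y _.
rewrite /Bs_coef -/(agree_off_bnd x y) -/(agree_off_bnd y z).
case hxy: (agree_off_bnd x y); last by rewrite mul0r.
by rewrite (agree_off_bnd_trans z hxy) hxz !mulr0.
Qed.

Lemma Bp_Oa_BpE (e : tl_E Lat) (a : L) (psi : state M Lat) z :
  Bp p (Oa a e (Bp p psi)) z
  = \sum_(x : config) psi x / totdim M ^+ 4 *
      \sum_(s : L) \sum_(t : L) d M s * d M t *
        sandwich_coef e (fun b => S M a b / S M (lab1 M) b) s t x z.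
Proof.
rewrite /Bp /Bps /Oa /sandwich_coef.
transitivity (\sum_(t : L) \sum_(y : config) \sum_(s : L) \sum_(x : config)
  psi x / totdim M ^+ 4 * (d M s * d M t *
   (Bs_coef p s x y * (S M a (y e) / S M (lab1 M) (y e) * Bs_coef p t y z)))).
  apply: eq_bigr => t _; rewrite big_distrr /=; apply: eq_bigr => y _.
  rewrite !big_distrr /=; apply: eq_bigr => s _; rewrite !big_distrr /=.
  by apply: eq_bigr => x _; rewrite -!exprVn; ring.
under eq_bigr => t _ do under eq_bigr => y _ do rewrite exchange_big.
under eq_bigr => t _ do rewrite exchange_big.
rewrite exchange_big; apply: eq_bigr => x _.
under eq_bigr => t _ do rewrite exchange_big.
rewrite exchange_big big_distrr; apply: eq_bigr => s _.
rewrite big_distrr; apply: eq_bigr => t _.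
by rewrite !big_distrr; apply: eq_bigr => y _.
Qed.

Definition weight_at (j : 'I_n) (g : L -> C) k b := if k == j then g b else 1.

Lemma sandwich_coefE (j : 'I_n) (g : L -> C) s t x z : agree_off_bnd x z ->
  sandwich_coef (pl_bnd p j) g s t x z
  = \sum_(f : {ffun 'I_n -> L}) (\prod_i weight_at j g i (f i)) *
     ((\prod_i F M (x (pl_leg p i)) (x (pl_bnd p i)) (x (pl_bnd p (ordS i)))
                   s (f (ordS i)) (f i)) *
      (\prod_i F M (x (pl_leg p i)) (f i) (f (ordS i))
                   t (z (pl_bnd p (ordS i))) (z (pl_bnd p i)))).
Proof.
move=> hxz.
pose Bx y := \prod_i F M (x (pl_leg p i)) (x (pl_bnd p i)) (x (pl_bnd p (ordS i)))
                          s (y (pl_bnd p (ordS i))) (y (pl_bnd p i)).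
pose Bz y := \prod_i F M (y (pl_leg p i)) (y (pl_bnd p i)) (y (pl_bnd p (ordS i)))
                          t (z (pl_bnd p (ordS i))) (z (pl_bnd p i)).
transitivity (\sum_(y : config) if agree_off_bnd x y then Bx y * (g (y (pl_bnd p j)) * Bz y) else 0).
  apply: eq_bigr => y _; rewrite /Bs_coef -/(agree_off_bnd x y) -/(agree_off_bnd y z).
  case hxy: (agree_off_bnd x y); last by rewrite mul0r.
  by rewrite (agree_off_bnd_trans z hxy) hxz.
rewrite sum_agree_off_bnd; apply: eq_bigr => f _.
have -> : \prod_i weight_at j g i (f i) = g (f j).
  by rewrite (bigD1 j) //= big1 ?mulr1 /weight_at ?eqxx // => i /negbTE ->.
rewrite set_bnd_bnd mulrCA; congr (_ * (_ * _)); apply: eq_bigr => i _.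
  by rewrite !set_bnd_bnd.
by rewrite !set_bnd_bnd set_bnd_off ?leg_off_bnd.
Qed.

Lemma sum_sandwich_coef_eq0 (j : 'I_n) (g : L -> C) x z :
  \sum_(b : L) g b * (d M b * d M b) = 0 ->
  \sum_(s : L) \sum_(t : L) d M s * d M t * sandwich_coef (pl_bnd p j) g s t x z = 0.
Proof.
move=> hg; case hxz: (agree_off_bnd x z); last first.
  by apply: big1 => s _; apply: big1 => t _; rewrite sandwich_coef_off ?hxz ?mulr0.
under eq_bigr => s _ do under eq_bigr => t _ do
  rewrite sandwich_coefE // loop_composition big_distrr.
under eq_bigr => s _ do rewrite exchange_big.
rewrite exchange_big /=; apply: big1 => u _.
under eq_bigr => s _ do under eq_bigr => t _ do rewrite mulrCA.
under eq_bigr => s _ do rewrite -big_distrr.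
rewrite -big_distrr /= (@sum_prod_vertical_kernel_eq0 _ _ _ _ _ j) ?mulr0 //.
  by move=> k /negbTE hk b; rewrite /weight_at hk.
by rewrite /weight_at eqxx.
Qed.

End Plaquette.

Section SMatrix.
Variables (C : numClosedFieldType) (M : LWdata C).
Local Notation L := (lab M).
Local Notation d := (d M).
Local Notation S := (S M).

Lemma totdim_gt0 : 0 < totdim M.
Proof.
rewrite sqrtC_gt0 (bigD1 (lab1 M)) //= d_one expr1n.
rewrite (lt_le_trans ltr01) // lerDl.
by apply: sumr_ge0 => b _; rewrite exprn_ge0 // ltW // d_pos.
Qed.

Lemma totdim_neq0 : totdim M != 0.
Proof. by rewrite gt_eqF // totdim_gt0. Qed.

Lemma S1E b : S (lab1 M) b = d b / totdim M.
Proof. exact: S_one. Qed.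

Lemma sum_S_div_S1_d2 a : a != lab1 M ->
  \sum_(b : L) S a b / S (lab1 M) b * (d b * d b) = 0.
Proof.
move=> ha.
have S1_conj b : (S (lab1 M) b)^* = S (lab1 M) b.
  by apply/conj_Creal/ger0_real; rewrite S1E divr_ge0 ?ltW ?d_pos ?totdim_gt0.
transitivity (totdim M ^+ 2 * \sum_(b : L) S a b * (S (lab1 M) b)^*).
  rewrite big_distrr /=; apply: eq_bigr => b _; rewrite S1_conj S1E.
  by field; rewrite d_neq0 totdim_neq0.
by rewrite S_unitary (negbTE ha) mulr0.
Qed.

End SMatrix.

Theorem lemma11 (C : numClosedFieldType) (M : LWdata C) (Lat : trivalent_lattice)
  (p : plaquette Lat) (e : tl_E Lat) (a : lab M)
  (ha : a != lab1 M) (he : on_bnd p e)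
  (psi : state M Lat) :
  valid psi -> Bp p psi = psi -> Bp p (Oa a e psi) = (fun _ => 0).
Proof.
move=> _ hB; apply: functional_extensionality => z.
case/existsP: he => j /eqP <-.
rewrite -hB Bp_Oa_BpE big1 // => x _.
by rewrite sum_sandwich_coef_eq0 ?mulr0 // sum_S_div_S1_d2.
Qed.
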